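(* Let $\Theta$ be a finite simple oriented graph with simple cycles $C_1,\ldots,C_k$ ($k\geq 1$) which contains no two different cycles connected by an oriented path, and fix on the free monoid $F$ on $V(\Theta)$ the deg-lex order induced by a vertex order as described in the context. Let $u,v,w\in F$ with $\operatorname{supp}(u),\operatorname{supp}(w)\subseteq V(C_n)$ for some cycle $C_n$, and suppose every word in the family $u^*vw^*=\{u^avw^b: a,b\geq 0\}$ is reduced. Then either $v$ contains a vertex connected by an edge with $C_n$, or this family of words can be expressed as a finite union of sets of the form $pr^*q=\{pr^cq:c\geq0\}$ or $\{p\}$, for some words $p,q,r\in F$.
   Context: $\mathrm{HK}_\Theta$: generated by vertices $x$ with $x^2=x$; $xy=yx$ if $x,y$ not joined by an edge; $xyx=yxy=xy$ if $x\to y$. The support $\operatorname{supp}(w)$ is the set of letters occurring in $w$. Maximal cycle-reachable subgraph $\Theta'$: full subgraph on all cycle vertices and all vertices joined to some cycle by an oriented path. For a non-cycle vertex $x$ of $\Theta'$, all oriented paths between $x$ and cycles go in the same direction; $k_x$ is the number of oriented paths of length $\geq0$ in $\Theta$ ending at $x$ (if paths go from $x$ into cycles) or beginning at $x$ (if paths go from cycles to $x$). Vertex order: write $C_j$ as $x_{1,j}\to\cdots\to x_{n(j),j}\to x_{1,j}$; on cycle vertices $x_{i,j}<x_{l,m}$ iff $j<m$, or $j=m$ and $i<l$; all cycle vertices are smaller than all non-cycle vertices; on non-cycle vertices of $\Theta'$ any order with $k_x<k_y\Rightarrow y<x$; vertices outside $\Theta'$ ordered arbitrarily (e.g. larger than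 those of $\Theta'$). Reduced word: with $w\nrightarrow t$ meaning $t\notin\operatorname{supp}(w)$ and no $x\in\operatorname{supp}(w)$ has $x\to t$, $t\nrightarrow w$ meaning $t\notin\operatorname{supp}(w)$ and no $y\in\operatorname{supp}(w)$ has $t\to y$, and $t\nleftrightarrow w$ meaning both, a word is reduced if it has no factor $twt$ with $w\nrightarrow t$ or with $t\nrightarrow w$, and no factor $t_1wt_2$ with $t_1>t_2$ and $t_2\nleftrightarrow t_1w$. *)

From mathcomp Require Import all_boot.
Set Implicit Arguments. Unset Strict Implicit. Unset Printing Implicit Defensive.

(* Oriented graph on a finite vertex type V with edge relation e (e x y : x -> y).
   Words of the free monoid F on V are sequences [seq V]; supp w = letters of w. *)
Section HK.
Variables (V : finType) (e : rel V).

Definition is_cycle (c : seq V) : bool := (0 < size c) && uniq c && cycle e c.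

Definition same_cycle (c d : seq V) : Prop := exists n, d = rot n c.

(* x lies on some simple cycle (a simple cycle has at most #|V| vertices) *)
Definition cycle_vertex (x : V) : bool :=
  [exists n : 'I_#|V|.+1, exists t : n.-tuple V, is_cycle t && (x \in t)].

(* x is a vertex of the maximal cycle-reachable subgraph Theta' *)
Definition in_Theta' (x : V) : Prop :=
  exists y, cycle_vertex y && (connect e x y || connect e y x).

Definition npaths_to (x : V) : nat :=
  \sum_(n < #|V|.+1)
    #|[pred t : n.-tuple V | (0 < n) && uniq t && sorted e t && (last x t == x)]|.
Definition npaths_from (x : V) : nat :=
  \sum_(n < #|V|.+1)
    #|[pred t : n.-tuple V | (0 < n) && uniq t && sorted e t && (head x t == x)]|.

Definition kval (x : V) : nat :=
  if [exists y, cycle_vertex y && connect e x y] then npaths_to x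
  else npaths_from x.

Variable rk : V -> nat. (* vertex order: t1 < t2 iff rk t1 < rk t2 *)

Definition nto_r (w : seq V) (t : V) : bool := (t \notin w) && all (fun x => ~~ e x t) w.
Definition nto_l (t : V) (w : seq V) : bool := (t \notin w) && all (fun y => ~~ e t y) w.
Definition nto_lr (t : V) (w : seq V) : bool := nto_r w t && nto_l t w.

Definition reduced (s : seq V) : Prop :=
  (~ exists a t w b, s = a ++ t :: w ++ t :: b /\ (nto_r w t || nto_l t w)) /\
  (~ exists a t1 w t2 b, s = a ++ t1 :: w ++ t2 :: b /\
        rk t2 < rk t1 /\ nto_lr t2 (t1 :: w)).

End HK.

Definition wpow (T : Type) (u : seq T) (a : nat) : seq T := flatten (nseq a u).

From mathcomp Require Import all_boot zify.
Set Implicit Arguments. Unset Strict Implicit. Unset Printing Implicit Defensive.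

(* If a letter of v is adjacent to C_n we are in the first case; otherwise the letters of v
   lie off C_n and commute with every letter of C_n.  When u and w are both nonempty,
   reducedness of u v w then forces rk (last u) <= rk (head v) <= rk (head w), which the
   vertex order forbids for a vertex off C_n, so v is empty.  A chord of C_n would close a
   second cycle through a vertex of C_n, so C_n is chordless, and the projection of a reduced
   word over C_n onto an edge x -> next x alternates.  Hence if z z is reduced, every vertex
   of C_n occurs equally often in z, say k times in u and m times in w.  Then u^m and w^k
   have the same projections onto all pairs of dependent letters; as reduced words are
   determined by these projections, u^m = w^k and u^* w^* is the union of the u^i w^*,
   i < m. *)

Section Powers.
Variable T : Type.
Implicit Types (s : seq T) (p : pred T).

Lemma wpow1 s : wpow s 1 = s. Proof. exact: cats0. Qed.

Lemma wpow2 s : wpow s 2 = s ++ s. Proof. by rewrite /wpow /= cats0. Qed.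

Lemma wpow_nil n : wpow [::] n = [::] :> seq T. Proof. by elim: n. Qed.

Lemma wpowD s m n : wpow s (m + n) = wpow s m ++ wpow s n.
Proof. by rewrite /wpow nseqD flatten_cat. Qed.

Lemma wpowM s m n : wpow s (m * n) = wpow (wpow s m) n.
Proof. by elim: n => [|n IHn]; rewrite ?muln0 // mulnS wpowD IHn. Qed.

Lemma filter_wpow p s n : filter p (wpow s n) = wpow (filter p s) n.
Proof. by rewrite /wpow filter_flatten map_nseq. Qed.

Lemma count_wpow p s n : count p (wpow s n) = n * count p s.
Proof. by rewrite /wpow count_flatten map_nseq sumn_nseq mulnC. Qed.

Lemma head_wpow x s n : 0 < n -> head x (wpow s n) = head x s.
Proof. by case: n => // n _; case: s => //; rewrite wpow_nil. Qed.

End Powers.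

Lemma mem_wpow (T : eqType) (s : seq T) n : {subset wpow s n <= s}.
Proof. by move=> z /flattenP[t]; rewrite mem_nseq => /andP[_ /eqP->]. Qed.

Section Projections.
Variable T : eqType.
Implicit Types (x y : T) (s : seq T).

Definition proj x y s := [seq z <- s | (z == x) || (z == y)].

Lemma projC x y s : proj x y s = proj y x s.
Proof. by apply: eq_filter => z; rewrite orbC. Qed.

Lemma proj_wpow x y s n : proj x y (wpow s n) = wpow (proj x y s) n.
Proof. exact: filter_wpow. Qed.

Lemma count_projl x y s : count_mem x (proj x y s) = count_mem x s.
Proof. by rewrite count_filter; apply: eq_count => z /=; case: eqP. Qed.

Lemma size_proj x y s : x != y -> size (proj x y s) = count_mem x s + count_mem y s.
Proof.
move=> xy; rewrite size_filter -count_predUI.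
rewrite [count (predI _ _) s](@eq_count _ _ pred0) ?count_pred0 ?addn0 // => z /=.
by case: eqP => // ->; rewrite (negbTE xy).
Qed.

Lemma all_proj x y s : all (mem [:: x; y]) (proj x y s).
Proof. by apply/allP => z; rewrite mem_filter !inE => /andP[]. Qed.

Lemma proj_diag x s : proj x x s = nseq (count_mem x s) x.
Proof. by elim: s => //= z s ->; rewrite orbb; case: eqP => [->|]. Qed.

Lemma proj_notin x y s : x \notin s -> proj x y s = proj y y s.
Proof.
move=> xs; apply: eq_in_filter => z zs.
by rewrite orbb; case: eqP zs => // ->; rewrite (negbTE xs).
Qed.

End Projections.

Section Alternation.
Variable T : eqType.
Implicit Types (a b x y : T) (s t : seq T).

Definition alternating s := sorted [rel a b : T | a != b] s.

Lemma in_pair_neq_eq x y a b b' : a \in [:: x; y] -> b \in [:: x; y] -> b' \in [:: x; y] ->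
  b != a -> b' != a -> b = b'.
Proof. by rewrite !inE => /orP[]/eqP-> /orP[]/eqP-> /orP[]/eqP->; rewrite ?eqxx. Qed.

Lemma alternating_count a b s : a != b -> all (mem [:: a; b]) s -> alternating (a :: s) ->
  count_mem a (a :: s) = count_mem b (a :: s) + (last a s == a).
Proof.
elim: s a b => [|z s IHs] a b ab /=; first by rewrite eqxx (negbTE ab).
move=> /andP[zab sab] /andP[az zs]; have zb : z = b.
  by move: zab az; rewrite !inE => /orP[]/eqP-> //=; rewrite eqxx.
subst z; have ba : b != a by rewrite eq_sym.
have sba : all (mem [:: b; a]) s by apply: sub_all sab => z; rewrite !inE orbC.
have lab : last b s \in [:: a; b].
  by move: (mem_last b s); rewrite inE => /orP[/eqP->|/(allP sab)]; rewrite // !inE eqxx orbT.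
move: (IHs b a ba sba zs); rewrite /= !eqxx (negbTE ab) (negbTE ba) /=.
by move: lab; rewrite !inE => /orP[]/eqP->; rewrite eqxx ?(negbTE ab) ?(negbTE ba) /=; lia.
Qed.

Lemma alternating_cycle_count x y s : x != y -> all (mem [:: x; y]) s ->
  alternating (s ++ s) -> count_mem x s = count_mem y s.
Proof.
case: s => // z s xy /= /andP[zxy sxy].
rewrite /alternating /= cat_path /= => /andP[zs /andP[lz _]].
have syx : all (mem [:: y; x]) s by apply: sub_all sxy => t; rewrite !inE orbC.
move: zxy; rewrite !inE => /orP[]/eqP zE; subst z.
  by have := alternating_count xy sxy zs; rewrite (negbTE lz) addn0.
have yx : y != x by rewrite eq_sym.
by have := alternating_count yx syx zs; rewrite (negbTE lz) addn0.
Qed.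

Lemma alternating_eq x y s t : all (mem [:: x; y]) s -> all (mem [:: x; y]) t ->
  alternating s -> alternating t -> head x s = head x t -> size s = size t -> s = t.
Proof.
elim: s t => [|a s IHs] [|b t] //= /andP[axy sxy] /andP[bxy txy] As At ab [st]; subst b.
have hd : head x s = head x t.
  case: s t st As At sxy txy {IHs} => [|a' s] [|b' t] //= _ /andP[ba' _] /andP[bb' _].
  move=> /andP[a'xy _] /andP[b'xy _].
  by apply: (in_pair_neq_eq axy); rewrite // eq_sym.
by rewrite (IHs t sxy txy (path_sorted As) (path_sorted At) hd st).
Qed.

Lemma alternating_head_eq x y s t : all (mem [:: x; y]) (s ++ t) ->
  s != [::] -> t != [::] -> alternating (s ++ s) -> alternating (s ++ t) ->
  head x s = head x t.
Proof.
case: s => // a s; case: t => // b t; rewrite all_cat => /andP[/= /andP[axy sxy] /andP[bxy _]] _ _.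
rewrite /alternating /= !cat_path /= => /andP[_ /andP[la _]] /andP[_ /andP[lb _]].
have lxy : last a s \in [:: x; y].
  by move: (mem_last a s); rewrite inE => /orP[/eqP->|/(allP sxy)].
by apply: (in_pair_neq_eq lxy); rewrite // eq_sym.
Qed.

Lemma filter_repeat_factor (p : pred T) s : ~~ alternating (filter p s) ->
  exists A z X B, s = A ++ z :: X ++ z :: B /\ p z /\ ~~ has p X.
Proof.
elim: s => //= h s IHs; case: ifP => ph; last first.
  by move/IHs=> [A [z [X [B [-> pzX]]]]]; exists (h :: A), z, X, B.
case Es: (filter p s) => [|h' F] //=; rewrite /alternating /= => /nandP[/negbNE/eqP hh'|nF].
  have hs : has p s by rewrite has_filter Es.
  move: Es; case/split_find: hs => y X B py pX.
  move: (pX); rewrite has_filter negbK => /eqP pX0.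
  rewrite -cats1 -catA filter_cat pX0 /= py => -[yh' _].
  by exists [::], h, X, B; rewrite yh' -hh'.
have /IHs[A [z [X [B [-> pzX]]]]] : ~~ alternating (filter p s) by rewrite Es.
by exists (h :: A), z, X, B.
Qed.

End Alternation.

Section NormalForm.
Variables (V : finType) (e : rel V) (rk : V -> nat).
Implicit Types (a b x y : V) (s : seq V).

Definition twt_free s :=
  ~ exists p t w q, s = p ++ t :: w ++ t :: q /\ (nto_r e w t || nto_l e t w).

Definition lex_normal s :=
  ~ exists p t1 w t2 q, s = p ++ t1 :: w ++ t2 :: q /\ rk t2 < rk t1 /\ nto_lr e t2 (t1 :: w).

Lemma reduced_twt_free s : reduced e rk s -> twt_free s. Proof. by case. Qed.

Lemma reduced_lex_normal s : reduced e rk s -> lex_normal s. Proof. by case. Qed.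

Definition dependent x y := [|| x == y, e x y | e y x].

Lemma lex_normal_le p t1 w t2 q : lex_normal (p ++ t1 :: w ++ t2 :: q) ->
  nto_lr e t2 (t1 :: w) -> rk t1 <= rk t2.
Proof. by move=> N ind; rewrite leqNgt; apply/negP => lt; apply: N; exists p, t1, w, t2, q. Qed.

Lemma lex_normal_behead a s : lex_normal (a :: s) -> lex_normal s.
Proof.
by move=> N [p [t1 [w [t2 [q [E H]]]]]]; apply: N; exists (a :: p), t1, w, t2, q; rewrite E.
Qed.

Lemma nto_lr_nonadjacent t s : t \notin s -> {in s, forall y, ~~ e t y && ~~ e y t} ->
  nto_lr e t s.
Proof.
move=> ts adj; rewrite /nto_lr /nto_r /nto_l ts /=.
by apply/andP; split; apply/allP => y /adj /andP[].
Qed.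

Lemma proj_cat_head x z p r : x \notin p -> z \in p -> exists r', proj x z (p ++ r) = z :: r'.
Proof.
elim: p => // y p IHp; rewrite !inE negb_or => /andP[xy xp].
case: (eqVneq z y) => [<- _ | zy /= zp]; first by rewrite /proj /= eqxx orbT; eexists.
by rewrite /proj /= [y == x]eq_sym (negbTE xy) [y == z]eq_sym (negbTE zy); apply: IHp.
Qed.

(* The first a of b :: s2 is preceded only by letters independent of a: for a dependent z the
   projections onto a and z would start with a on the left and with z on the right. *)
Lemma lex_normal_head_le a b s1 s2 : a != b ->
  (forall x y, dependent x y -> proj x y (a :: s1) = proj x y (b :: s2)) ->
  lex_normal (b :: s2) -> rk b <= rk a.
Proof.
move=> ab Eproj N.
have has_a : has (pred1 a) (b :: s2).
  have : a \in proj a a (b :: s2) by rewrite -Eproj /dependent ?eqxx // mem_filter eqxx inE eqxx.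
  by rewrite mem_filter has_pred1 => /andP[].
have [p [q [E ap]]] : exists p q, b :: s2 = rcons p a ++ q /\ a \notin p.
  by case/split_find: has_a => x p q /eqP-> ap; exists p, q; rewrite -has_pred1.
case: p E ap => [[ba]|b' p [<- E] ap]; first by rewrite ba eqxx in ab.
rewrite E cat_rcons in N Eproj; apply: (lex_normal_le (p := [::]) N).
apply: (nto_lr_nonadjacent ap) => z zp; rewrite -negb_or; apply/negP => adj.
have [r' Ez] := proj_cat_head (a :: q) ap zp.
have := Eproj a z; rewrite /dependent adj orbT Ez /proj /= eqxx => /(_ isT) [az].
by move: ap; rewrite az zp.
Qed.

Lemma lex_normal_proj_inj s1 s2 : injective rk -> lex_normal s1 -> lex_normal s2 ->
  (forall x y, dependent x y -> proj x y s1 = proj x y s2) -> s1 = s2.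
Proof.
move=> rk_inj; elim: s1 s2 => [|a s1 IHs] [|b s2] // N1 N2 Eproj.
- by have := Eproj b b; rewrite /dependent /proj /= !eqxx => /(_ isT).
- by have := Eproj a a; rewrite /dependent /proj /= !eqxx => /(_ isT).
have [Eab|ab] := eqVneq a b.
  subst b; congr (_ :: _); apply: IHs (lex_normal_behead N1) (lex_normal_behead N2) _ => x y dxy.
  by have := Eproj x y dxy; rewrite /proj /=; case: ifP => _ // [].
have ba := lex_normal_head_le ab Eproj N2.
have ab' : rk a <= rk b.
  by apply: (lex_normal_head_le _ _ N1) => [|x y /Eproj ->]; rewrite // eq_sym.
have /rk_inj Eba : rk b = rk a by apply/anti_leq; rewrite ba ab'.
by rewrite Eba eqxx in ab.
Qed.

End NormalForm.

Lemma next_last (T : eqType) (y x : T) p :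
  uniq (y :: rcons p x) -> next (y :: rcons p x) x = y.
Proof.
rewrite cons_uniq mem_rcons inE negb_or rcons_uniq => /andP[/andP[yx _] /andP[xp _]].
have xin : x \in y :: rcons p x by rewrite inE mem_rcons mem_head orbT.
rewrite next_nth xin /= (negbTE yx) -cats1 index_cat (negbTE xp) /= eqxx addn0.
by rewrite nth_default // size_cat addn1.
Qed.

Section Cycles.
Variables (V : finType) (e : rel V).
Implicit Types (c d s : seq V) (x y : V).

Definition chordless c := {in c &, forall x y, e x y -> y = next c x}.

Lemma isolated_cycle_chordless c : (forall x, ~~ e x x) -> is_cycle e c ->
  (forall d x, is_cycle e d -> x \in c -> x \in d -> same_cycle c d) -> chordless c.
Proof.
move=> e_irr /andP[/andP[_ Uc] cyc] iso x y xc yc exy.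
have yx : y != x by apply: contraNneq _ (e_irr x) => Eyx; rewrite -{2}Eyx.
case: (rot_to_arc Uc yc xc yx) => i p1 p2 _ _ Erot.
have Ud : uniq (y :: p1 ++ x :: p2) by rewrite -Erot rot_uniq.
have Pd : path e y (p1 ++ x :: p2).
  by move: cyc; rewrite -(rot_cycle i) Erot /= rcons_path => /andP[].
have d_cyc : is_cycle e (y :: rcons p1 x).
  rewrite /is_cycle /= rcons_path last_rcons exy andbT.
  move: Ud Pd; rewrite /= -cat_rcons cat_path mem_cat negb_or cat_uniq.
  by case/andP=> /andP[-> _] /andP[-> _] /andP[-> _].
have [n Ed] := iso _ y d_cyc yc (mem_head _ _).
have p2nil : p2 = [::].
  apply: size0nil; move: (congr1 size Ed).
  by rewrite size_rot -(size_rot i c) Erot /= size_rcons size_cat /=; lia.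
by rewrite -(next_rot i Uc) Erot p2nil cats1 next_last // -cats1 -p2nil -Erot rot_uniq.
Qed.

End Cycles.

Lemma next_invariant_const (T : eqType) (R : Type) (c : seq T) (f : T -> R) : uniq c ->
  {in c, forall x, f (next c x) = f x} -> {in c &, forall x y, f x = f y}.
Proof.
case: c => // h c' Uc fnext.
have fnth i : i < size (h :: c') -> f (nth h (h :: c') i) = f h.
  elim: i => // i IHi ilt; have ilt' : i < size (h :: c') by apply: ltnW.
  by rewrite -(IHi ilt') -(fnext _ (mem_nth h ilt')) next_nth mem_nth ?index_uniq.
suff fh x : x \in h :: c' -> f x = f h by move=> x y /fh-> /fh->.
by move=> xc; rewrite -(nth_index h xc) fnth ?index_mem.
Qed.

Section ChordlessCycle.
Variables (V : finType) (e : rel V) (c : seq V).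
Hypotheses (e_irr : forall x, ~~ e x x) (c_uniq : uniq c) (c_cycle : cycle e c).
Hypothesis c_chordless : chordless e c.
Implicit Types (s : seq V) (x y : V).

Lemma next_neq x : x \in c -> next c x != x.
Proof.
move=> xc; apply: contraNneq _ (e_irr x) => Enx.
by rewrite -{2}Enx; apply: next_cycle.
Qed.

Lemma proj_next_alternating s x : {subset s <= c} -> x \in c -> twt_free e s ->
  alternating (proj x (next c x) s).
Proof.
move=> sc xc tf; apply/negPn/negP => /filter_repeat_factor[A [z [X [B [Es [zx Xx]]]]]].
apply: tf; exists A, z, X, B; split => //.
have Xc : {subset X <= c}.
  by move=> t tX; apply: sc; rewrite Es mem_cat inE mem_cat tX !orbT.
have tX t : t \in X -> (t != x) && (t != next c x).
  by move=> /(hasPn Xx); rewrite negb_or.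
case/orP: zx => /eqP->; apply/orP; [right | left]; apply/andP; split.
- by apply/negP => /tX; rewrite eqxx.
- apply/allP => t tXt; apply/negP => /(c_chordless xc (Xc t tXt)) Et.
  by move: (tX t tXt); rewrite Et eqxx andbF.
- by apply/negP => /tX; rewrite eqxx andbF.
- apply/allP => t tXt; apply/negP => /(c_chordless (Xc t tXt)); rewrite mem_next => /(_ xc).
  move=> /(can_inj (prev_next c_uniq)) Ext.
  by move: (tX t tXt); rewrite Ext eqxx.
Qed.

Lemma count_mem_cycle_const s : {subset s <= c} -> twt_free e (s ++ s) ->
  {in c &, forall x y, count_mem x s = count_mem y s}.
Proof.
move=> sc tf; apply: next_invariant_const c_uniq _ => x xc.
have ssc : {subset s ++ s <= c} by move=> t; rewrite mem_cat orbb => /sc.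
have := proj_next_alternating ssc xc tf; rewrite /proj filter_cat => alt.
rewrite -(count_projl x (next c x)) -(count_projl (next c x) x) projC.
by apply/esym/alternating_cycle_count; rewrite ?all_proj // eq_sym next_neq.
Qed.

Lemma count_mem_cycle_pos s : s != [::] -> {subset s <= c} -> twt_free e (s ++ s) ->
  {in c, forall x, 0 < count_mem x s}.
Proof.
case: s => // y s _ sc tf x xc.
by rewrite (count_mem_cycle_const sc tf xc (sc y (mem_head _ _))) /= eqxx.
Qed.

End ChordlessCycle.

Section CycleWords.
Variables (V : finType) (e : rel V) (rk : V -> nat) (c u w : seq V).
Hypotheses (e_irr : forall x, ~~ e x x) (c_uniq : uniq c) (c_cycle : cycle e c).
Hypotheses (c_chordless : chordless e c) (rk_inj : injective rk).
Hypotheses (u_ne : u != [::]) (w_ne : w != [::]).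
Hypotheses (uc : {subset u <= c}) (wc : {subset w <= c}).
Hypotheses (u_red : forall a, reduced e rk (wpow u a)) (w_red : forall b, reduced e rk (wpow w b)).
Hypothesis uw_free : twt_free e (u ++ w).

Let uu_free : twt_free e (u ++ u). Proof. by rewrite -wpow2; apply: reduced_twt_free (u_red 2). Qed.
Let ww_free : twt_free e (w ++ w). Proof. by rewrite -wpow2; apply: reduced_twt_free (w_red 2). Qed.

Let cnt_u := count_mem_cycle_const e_irr c_uniq c_cycle c_chordless uc uu_free.
Let cnt_w := count_mem_cycle_const e_irr c_uniq c_cycle c_chordless wc ww_free.
Let pos_u := count_mem_cycle_pos e_irr c_uniq c_cycle c_chordless u_ne uc uu_free.
Let pos_w := count_mem_cycle_pos e_irr c_uniq c_cycle c_chordless w_ne wc ww_free.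

Section BaseVertex.
Variables (x0 : V) (x0c : x0 \in c).
Local Notation m := (count_mem x0 w).
Local Notation k := (count_mem x0 u).

Lemma count_wpow_balanced z : count_mem z (wpow u m) = count_mem z (wpow w k).
Proof.
rewrite !count_wpow; have [zc|zNc] := boolP (z \in c).
  by rewrite (cnt_u zc x0c) (cnt_w zc x0c) mulnC.
have [zu zw] : z \notin u /\ z \notin w by split; apply: contra zNc; [apply: uc | apply: wc].
by rewrite (count_memPn zu) (count_memPn zw) !muln0.
Qed.

Lemma proj_next_wpow_eq x : x \in c ->
  proj x (next c x) (wpow u m) = proj x (next c x) (wpow w k).
Proof.
move=> xc; set y := next c x.
have xy : x != y by rewrite eq_sym (next_neq e_irr c_cycle).
have proj_ne s : 0 < count_mem x s -> proj x y s != [::].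
  by rewrite -(count_projl x y); apply: contraTneq => ->.
apply: (alternating_eq (all_proj _ _ _) (all_proj _ _ _)).
- apply: (proj_next_alternating c_uniq c_chordless _ xc (reduced_twt_free (u_red m))).
  by move=> t /mem_wpow /uc.
- apply: (proj_next_alternating c_uniq c_chordless _ xc (reduced_twt_free (w_red k))).
  by move=> t /mem_wpow /wc.
- rewrite !proj_wpow !head_wpow ?pos_u ?pos_w //.
  apply: (alternating_head_eq (y := y)); rewrite ?proj_ne ?pos_u ?pos_w //.
  + by rewrite -filter_cat all_proj.
  + rewrite -filter_cat; apply: (proj_next_alternating c_uniq c_chordless _ xc uu_free).
    by move=> t; rewrite mem_cat orbb => /uc.
  + rewrite -filter_cat; apply: (proj_next_alternating c_uniq c_chordless _ xc uw_free).
    by move=> t; rewrite mem_cat => /orP[/uc|/wc].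
- by rewrite !size_proj // !count_wpow_balanced.
Qed.

Lemma cycle_wpow_eq : wpow u m = wpow w k.
Proof.
have out z : z \notin c -> z \notin wpow u m /\ z \notin wpow w k.
  by move=> zNc; split; apply: contra zNc => /mem_wpow; [apply: uc | apply: wc].
have diag z : proj z z (wpow u m) = proj z z (wpow w k).
  by rewrite !proj_diag count_wpow_balanced.
apply: (lex_normal_proj_inj rk_inj (reduced_lex_normal (u_red _))).
  exact: reduced_lex_normal (w_red _).
move=> x y.
have [xc|/out[xu xw]] := boolP (x \in c); last by rewrite !proj_notin.
have [yc|/out[yu yw]] := boolP (y \in c); last by rewrite projC (projC x) !proj_notin.
case/or3P=> [/eqP<- //|exy|eyx].
  by rewrite (c_chordless xc yc exy) proj_next_wpow_eq.
by rewrite projC (projC x) (c_chordless yc xc eyx) proj_next_wpow_eq.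
Qed.

End BaseVertex.

Lemma cycle_words_commensurable : exists2 m, 0 < m & exists k, wpow u m = wpow w k.
Proof.
have [x0 x0u] : exists x0, x0 \in u by case: (u) u_ne => // x0 ? _; exists x0; rewrite mem_head.
have x0c := uc x0u.
by exists (count_mem x0 w); [apply: pos_w | exists (count_mem x0 u); apply: cycle_wpow_eq].
Qed.

End CycleWords.

Lemma cycle_vertex_mem (V : finType) (e : rel V) c x :
  is_cycle e c -> x \in c -> cycle_vertex e x.
Proof.
move=> c_cyc xc; have /andP[/andP[_ c_uniq] _] := c_cyc.
have c_le : size c < #|V|.+1 by rewrite ltnS -(card_uniqP c_uniq) max_card.
by apply/existsP; exists (Ordinal c_le); apply/existsP; exists (in_tuple c); rewrite c_cyc xc.
Qed.

Section CycleOrder.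
Variables (V : finType) (e : rel V) (cs : seq (seq V)) (rk : V -> nat).
Hypothesis cs_all : forall c, is_cycle e c -> exists2 d, d \in cs & same_cycle d c.
Hypothesis ord_cyc1 : forall j m x y, j < m -> x \in nth [::] cs j -> y \in nth [::] cs m ->
  rk x < rk y.
Hypothesis ord_cyc3 : forall x y, cycle_vertex e x -> ~~ cycle_vertex e y -> rk x < rk y.

Lemma rank_above_cycle c x y z : c \in cs -> is_cycle e c -> x \notin c -> y \in c -> z \in c ->
  rk y <= rk x -> rk z < rk x.
Proof.
move=> c_in c_cyc xNc yc zc yx.
have [/existsP[n /existsP[t /andP[t_cyc xt]]]|xNcyc] := boolP (cycle_vertex e x); last first.
  exact: ord_cyc3 (cycle_vertex_mem c_cyc zc) xNcyc.
have [d d_in [r Et]] := cs_all t_cyc.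
have xd : x \in d by rewrite -(mem_rot r) -Et.
have [Ed Ec] : nth [::] cs (index d cs) = d /\ nth [::] cs (index c cs) = c by rewrite !nth_index.
case: (ltngtP (index d cs) (index c cs)) => [dc|cd|Edc].
- by have := @ord_cyc1 _ _ x y dc; rewrite Ed Ec ltnNge yx => /(_ xd yc).
- by have := @ord_cyc1 _ _ z x cd; rewrite Ed Ec; apply.
- by move: xNc; rewrite -Ec -Edc Ed xd.
Qed.

Lemma lex_normal_gap_nil c u v w : c \in cs -> is_cycle e c ->
  u != [::] -> w != [::] -> {subset u <= c} -> {subset w <= c} ->
  {in v & c, forall x y, ~~ e x y && ~~ e y x} -> lex_normal e rk (u ++ v ++ w) -> v = [::].
Proof.
move=> c_in c_cyc; case: v => // v0 v; case/lastP: u => // u t; case: w => // w0 w _ _.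
move=> uc wc v_nadj N.
have [tc w0c] : t \in c /\ w0 \in c.
  by split; [apply: uc; rewrite mem_rcons mem_head | apply: wc; rewrite mem_head].
have vNc z : z \in v0 :: v -> z \notin c.
  move=> zv; apply/negP => zc; have nzc : next c z \in c by rewrite mem_next.
  have /andP[/negP nxt _] := v_nadj _ _ zv nzc; apply: nxt.
  by apply: next_cycle zc; case/andP: c_cyc.
have v0Nc := vNc v0 (mem_head _ _).
have t_v0 : rk t <= rk v0.
  move: N; rewrite cat_rcons => N; apply: (lex_normal_le (w := [::]) N).
  apply: nto_lr_nonadjacent => [|z]; first by rewrite inE; apply: contraNneq v0Nc => ->.
  by rewrite inE => /eqP->; apply: v_nadj; rewrite ?mem_head.
have v0_w0 : rk v0 <= rk w0.
  apply: (lex_normal_le (p := rcons u t) N).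
  apply: nto_lr_nonadjacent => [|z zv]; first by apply/negP => /vNc; rewrite w0c.
  by rewrite andbC; apply: v_nadj.
by have := rank_above_cycle c_in c_cyc v0Nc tc w0c t_v0; rewrite ltnNge v0_w0.
Qed.

End CycleOrder.

Section Progressions.
Variable T : eqType.
Implicit Types (p q r u w : seq T) (F : seq T -> Prop).

Definition union_of_progressions F :=
  exists (prq : seq (seq T * seq T * seq T)) (ps : seq (seq T)),
    forall s, F s <->
      ((exists2 t, t \in prq & exists n, s = t.1.1 ++ wpow t.1.2 n ++ t.2) \/ s \in ps).

Lemma progression_union F p r q : (forall s, F s <-> exists n, s = p ++ wpow r n ++ q) ->
  union_of_progressions F.
Proof.
move=> FE; exists [:: (p, r, q)], [::] => s; rewrite FE; split.
  by move=> prq; left; exists (p, r, q); rewrite ?mem_head.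
by case=> [[t]|//]; rewrite inE => /eqP->.
Qed.

Lemma commensurable_union u w m k : 0 < m -> wpow u m = wpow w k ->
  union_of_progressions (fun s => exists a b, s = wpow u a ++ wpow w b).
Proof.
move=> m_gt0 Euw; exists [seq (wpow u i, w, [::]) | i <- iota 0 m], [::] => s; split.
  move=> [a [b ->]]; left; exists (wpow u (a %% m), w, [::]).
    by apply: map_f; rewrite mem_iota ltn_pmod.
  exists (k * (a %/ m) + b); rewrite /= cats0 {1}(divn_eq a m) addnC wpowD -catA.
  by rewrite mulnC wpowM Euw -wpowM wpowD.
by case=> [[t /mapP[i _ ->] [n ->]]|//]; exists i, n; rewrite cats0.
Qed.

End Progressions.

Theorem lemma3p3
  (V : finType) (e : rel V)
  (* finite simple oriented graph *)
  (e_irr : forall x, ~~ e x x)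
  (e_or : forall x y, e x y -> ~~ e y x)
  (* cs = [C_1; ...; C_k] : the simple cycles, k >= 1 *)
  (cs : seq (seq V))
  (cs_ne : 0 < size cs)
  (cs_cyc : forall c, c \in cs -> is_cycle e c)
  (cs_all : forall c, is_cycle e c -> exists2 d, d \in cs & same_cycle d c)
  (cs_diff : forall j m, j < m < size cs -> ~ same_cycle (nth [::] cs j) (nth [::] cs m))
  (* no two different cycles connected by an oriented path *)
  (no_path : forall c d x y, is_cycle e c -> is_cycle e d -> x \in c -> y \in d ->
      connect e x y -> same_cycle c d)
  (* the vertex order, given by an injective rank *)
  (rk : V -> nat) (rk_inj : injective rk)
  (ord_cyc1 : forall j m x y, j < m -> x \in nth [::] cs j -> y \in nth [::] cs m ->
      rk x < rk y)
  (ord_cyc2 : forall c x i l, c \in cs -> i < l < size c ->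
      rk (nth x c i) < rk (nth x c l))
  (ord_cyc3 : forall x y, cycle_vertex e x -> ~~ cycle_vertex e y -> rk x < rk y)
  (ord_k : forall x y, ~~ cycle_vertex e x -> ~~ cycle_vertex e y ->
      in_Theta' e x -> in_Theta' e y -> kval e x < kval e y -> rk y < rk x)
  (* the words *)
  (u v w : seq V) (c : seq V) (c_in : c \in cs)
  (su : {subset u <= c}) (sw : {subset w <= c})
  (red : forall a b, reduced e rk (wpow u a ++ v ++ wpow w b)) :
  (exists2 x, x \in v & exists2 y, y \in c & e x y || e y x) \/
  (exists (prq : seq (seq V * seq V * seq V)) (ps : seq (seq V)),
     forall s, (exists a b, s = wpow u a ++ v ++ wpow w b) <->
       ((exists2 t, t \in prq & exists n, s = t.1.1 ++ wpow t.1.2 n ++ t.2)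
        \/ s \in ps)).
Proof.
have c_cyc := cs_cyc c c_in; have /andP[/andP[_ c_uniq] c_cycle] := c_cyc.
have [adj|nadj] := boolP (has (fun x => has (fun y => e x y || e y x) c) v).
  by left; case/hasP: adj => x xv /hasP[y yc exy]; exists x => //; exists y.
right.
have v_nadj : {in v & c, forall x y, ~~ e x y && ~~ e y x}.
  by move=> x y xv yc; rewrite -negb_or; apply: (hasPn (hasPn nadj x xv)).
have [-> | u_ne] := eqVneq u [::].
  apply: (progression_union (p := v) (r := w) (q := [::])) => s.
  by split=> [[a [n ->]]|[n ->]]; [exists n | exists 0, n]; rewrite wpow_nil cats0.
have [-> | w_ne] := eqVneq w [::].
  apply: (progression_union (p := [::]) (r := u) (q := v)) => s.
  by split=> [[n [b ->]]|[n ->]]; [exists n | exists n, 0]; rewrite wpow_nil cats0.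
have c_chordless : chordless e c.
  apply: isolated_cycle_chordless => // d x d_cyc xc xd.
  exact: no_path c_cyc d_cyc xc xd (connect0 e x).
have red_uvw := reduced_lex_normal (red 1 1); rewrite !wpow1 in red_uvw.
have v_nil := lex_normal_gap_nil cs_all ord_cyc1 ord_cyc3 c_in c_cyc u_ne w_ne su sw v_nadj red_uvw.
subst v.
have u_red a : reduced e rk (wpow u a) by have := red a 0; rewrite cats0.
have w_red b : reduced e rk (wpow w b) by apply: red 0 b.
have uw_free : twt_free e (u ++ w) by have := reduced_twt_free (red 1 1); rewrite !wpow1.
have [m m_gt0 [k Euw]] := cycle_words_commensurable e_irr c_uniq c_cycle c_chordless rk_inj
  u_ne w_ne su sw u_red w_red uw_free.
exact: commensurable_union m_gt0 Euw.
Qed.
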